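(* Let $f:\{0,1\}^r\to\{0,1\}$ satisfy $f(0,\dots,0)=1$. If $f$ contains $\mathrm{IMPL}$ as a restriction, then $f$ contains $\mathrm{IMPL}$ as a $0$-restriction.
   Context: $g:\{0,1\}^s\to\{0,1\}$ is a restriction of $f$ if there are pairwise disjoint, possibly empty, sets $X_1,\dots,X_s,Z_0,Z_1$ with union $[r]$ such that $g(x_1,\dots,x_s)=f(u)$. Here $u_i=x_j$ for $i\in X_j$, $u_i=0$ for $i\in Z_0$, and $u_i=1$ for $i\in Z_1$. It is a $0$-restriction if this holds with $Z_1=\emptyset$. $\mathrm{IMPL}(y_1,y_2)=\overline{y_1}\vee y_2$. *)

From mathcomp Require Import all_boot.
Set Implicit Arguments. Unset Strict Implicit. Unset Printing Implicit Defensive.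

Definition boolfun (n : nat) := {ffun 'I_n -> bool} -> bool.

(* A partition of [r] into pairwise disjoint (possibly empty) sets X_1..X_s, Z_0, Z_1
   is encoded as a map sigma : 'I_r -> 'I_s + bool :
   sigma i = inl j  <-> i \in X_j ;  sigma i = inr b  <-> i \in Z_b. *)
Definition substitute (r s : nat) (sigma : 'I_r -> 'I_s + bool)
  (x : {ffun 'I_s -> bool}) : {ffun 'I_r -> bool} :=
  [ffun i => match sigma i with inl j => x j | inr b => b end].

Definition is_restriction (r s : nat) (g : boolfun s) (f : boolfun r) : Prop :=
  exists sigma : 'I_r -> 'I_s + bool,
    forall x : {ffun 'I_s -> bool}, g x = f (substitute sigma x).

(* g is a 0-restriction of f : as above with Z_1 empty *)
Definition is_0_restriction (r s : nat) (g : boolfun s) (f : boolfun r) : Prop :=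
  exists sigma : 'I_r -> 'I_s + bool,
    (forall i, sigma i <> inr true) /\
    forall x : {ffun 'I_s -> bool}, g x = f (substitute sigma x).

Definition IMPL : boolfun 2 :=
  fun x => ~~ x ord0 || x (@Ordinal 2 1 isT).

(** A restriction of [f] that sets the variables of [Z_1] to one is a
    0-restriction [h] of [f] with one extra variable [z], evaluated at [z = 1].
    For the restriction [IMPL y_1 y_2 = h y_1 y_2 1] we know moreover
    [h 0 0 0 = f 0 = 1].  If [h 0 1 0 = 1] then [h y_1 y_2 y_1] is [IMPL];
    otherwise [h 0 y_1 y_2] is.  Both are 0-restrictions of [h], hence of [f]. *)

From mathcomp Require Import all_boot.

Set Implicit Arguments.
Unset Strict Implicit.
Unset Printing Implicit Defensive.

Definition zero_free (r s : nat) (sigma : 'I_r -> 'I_s + bool) : Prop :=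
  forall i, sigma i <> inr true.

Definition comp_subst (r s t : nat)
    (sigma : 'I_r -> 'I_s + bool) (tau : 'I_s -> 'I_t + bool) (i : 'I_r) : 'I_t + bool :=
  match sigma i with inl j => tau j | inr b => inr b end.

Lemma substitute_comp (r s t : nat) (sigma : 'I_r -> 'I_s + bool)
    (tau : 'I_s -> 'I_t + bool) (x : {ffun 'I_t -> bool}) :
  substitute (comp_subst sigma tau) x = substitute sigma (substitute tau x).
Proof. by apply/ffunP => i; rewrite !ffunE /comp_subst; case: (sigma i) => // j; rewrite ffunE. Qed.

Lemma zero_free_comp (r s t : nat) (sigma : 'I_r -> 'I_s + bool)
    (tau : 'I_s -> 'I_t + bool) :
  zero_free sigma -> zero_free tau -> zero_free (comp_subst sigma tau).
Proof. by move=> zs zt i; rewrite /comp_subst; case: (sigma i) (zs i) => [j _|[] nb //]; exact: zt. Qed.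

Lemma substitute_zero_free0 (r s : nat) (sigma : 'I_r -> 'I_s + bool) :
  zero_free sigma -> substitute sigma [ffun => false] = [ffun => false].
Proof.
by move=> zs; apply/ffunP => i; rewrite !ffunE; case: (sigma i) (zs i) => [j _|[] // nb]; rewrite ?ffunE.
Qed.

Lemma is_0_restriction_trans (r s t : nat)
    (g : boolfun t) (h : boolfun s) (f : boolfun r) :
  is_0_restriction g h -> is_0_restriction h f -> is_0_restriction g f.
Proof.
move=> [tau [zt gh]] [sigma [zs hf]].
exists (comp_subst sigma tau); split; first exact: zero_free_comp.
by move=> x; rewrite gh hf substitute_comp.
Qed.

Lemma is_0_restriction_at0 (r s : nat) (g : boolfun s) (f : boolfun r) :
  is_0_restriction g f -> g [ffun => false] = f [ffun => false].
Proof. by move=> [sigma [zs gf]]; rewrite gf substitute_zero_free0. Qed.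

Definition extend (s : nat) (x : {ffun 'I_s -> bool}) (b : bool) :
    {ffun 'I_s.+1 -> bool} :=
  [ffun i => if unlift ord_max i is Some j then x j else b].

Lemma extendE (s : nat) (x : {ffun 'I_s -> bool}) b (j : 'I_s) :
  extend x b (lift ord_max j) = x j.
Proof. by rewrite ffunE liftK. Qed.

Lemma extend_max (s : nat) (x : {ffun 'I_s -> bool}) b :
  extend x b ord_max = b.
Proof. by rewrite ffunE unlift_none. Qed.

Definition subst_ones_to_max (r s : nat) (sigma : 'I_r -> 'I_s + bool)
    (i : 'I_r) : 'I_s.+1 + bool :=
  match sigma i with
  | inl j => inl (lift ord_max j)
  | inr true => inl ord_max
  | inr false => inr false
  end.

Lemma restriction_extend_0_restriction (r s : nat) (g : boolfun s) (f : boolfun r) :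
  is_restriction g f ->
  exists h : boolfun s.+1,
    is_0_restriction h f /\ forall x, h (extend x true) = g x.
Proof.
move=> [sigma gf].
exists (fun x => f (substitute (subst_ones_to_max sigma) x)); split.
  exists (subst_ones_to_max sigma); split=> // i.
  by rewrite /subst_ones_to_max; case: (sigma i) => [|[]].
move=> x; rewrite gf; congr f; apply/ffunP => i; rewrite !ffunE.
by rewrite /subst_ones_to_max; case: (sigma i) => [j|[]]; rewrite ?extendE ?extend_max.
Qed.

Definition dup_subst (s : nat) (j0 : 'I_s) (i : 'I_s.+1) : 'I_s + bool :=
  if unlift ord_max i is Some j then inl j else inl j0.

Lemma substitute_dup (s : nat) (j0 : 'I_s) (x : {ffun 'I_s -> bool}) :
  substitute (dup_subst j0) x = extend x (x j0).
Proof. by apply/ffunP => i; rewrite !ffunE /dup_subst; case: unlift. Qed.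

Lemma extend_const (s : nat) (b : bool) :
  extend [ffun => b] b = [ffun => b] :> {ffun 'I_s.+1 -> bool}.
Proof. by apply/ffunP => i; rewrite !ffunE; case: unlift => [j|]; rewrite ?ffunE. Qed.

Definition bits2 (a b : bool) : {ffun 'I_2 -> bool} :=
  [ffun i => if i == ord0 then a else b].

Lemma bits2_eta (x : {ffun 'I_2 -> bool}) : x = bits2 (x ord0) (x ord_max).
Proof.
apply/ffunP => i; rewrite ffunE; case: ifP => [/eqP -> //|].
by case: i => [[|[|k]] lt_i] //= _; apply: congr1; exact: val_inj.
Qed.

Lemma bits2_const (b : bool) : bits2 b b = [ffun => b].
Proof. by apply/ffunP => i; rewrite !ffunE if_same. Qed.

Lemma IMPL_bits2 (a b : bool) : IMPL (bits2 a b) = ~~ a || b.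
Proof. by rewrite /IMPL !ffunE. Qed.

Definition shift_subst (i : 'I_3) : 'I_2 + bool :=
  if unlift ord_max i is Some j then (if j == ord0 then inr false else inl ord0)
  else inl ord_max.

Lemma substitute_shift (x : {ffun 'I_2 -> bool}) :
  substitute shift_subst x = extend (bits2 false (x ord0)) (x ord_max).
Proof.
apply/ffunP => i; rewrite !ffunE /shift_subst.
by case: unlift => [j|] //; rewrite ffunE; case: (j == ord0).
Qed.

Lemma IMPL_0_restriction_of_extend (h : boolfun 3) :
  h [ffun => false] = true -> (forall x, h (extend x true) = IMPL x) ->
  is_0_restriction IMPL h.
Proof.
move=> h0 hI.
have h_one a b : h (extend (bits2 a b) true) = ~~ a || b by rewrite hI IMPL_bits2.
have h_zero : h (extend (bits2 false false) false) = true.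
  by rewrite bits2_const extend_const.
case hc: (h (extend (bits2 false true) false)).
- exists (dup_subst ord0); split; first by move=> i; rewrite /dup_subst; case: unlift.
  move=> x; rewrite substitute_dup (bits2_eta x) IMPL_bits2 ffunE /=.
  by case: (x ord0) (x ord_max) => [] []; rewrite ?h_one ?hc ?h_zero.
- exists shift_subst; split; first by move=> i; rewrite /shift_subst; case: unlift => [j|] //; case: (j == ord0).
  move=> x; rewrite substitute_shift (bits2_eta x) IMPL_bits2 !ffunE /=.
  by case: (x ord0) (x ord_max) => [] []; rewrite ?h_one ?hc ?h_zero.
Qed.

Theorem mainTheorem13 (r : nat) (f : boolfun r) :
  f [ffun => false] = true ->
  is_restriction IMPL f -> is_0_restriction IMPL f.
Proof.
move=> f0 /restriction_extend_0_restriction [h [hf hI]].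
have h0 : h [ffun => false] = true by rewrite (is_0_restriction_at0 hf).
exact: is_0_restriction_trans (IMPL_0_restriction_of_extend h0 hI) hf.
Qed.
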